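(* Let $X$ be a real-valued random variable and let $f,g:\mathbb{R}\to\mathbb{R}^+$ be bounded increasing functions. Then $$\operatorname{Var}[f(X)g(X)]\;\geq\;\operatorname{Var}[f(X)]\,\mathbb{E}[g(X)^2].$$ *)

From HB Require Import structures.
From mathcomp Require Import all_boot all_order all_algebra.
From mathcomp Require Import all_classical all_reals all_analysis.

From HB Require Import structures.
From mathcomp Require Import all_boot all_order all_algebra.
From mathcomp Require Import all_classical all_reals all_analysis.
From mathcomp Require Import ring lra measurable_realfun.
Import Order.TTheory GRing.Theory Num.Theory.
Local Open Scope classical_set_scope.
Local Open Scope ring_scope.

(* Write F = f(X), G = g(X), a = E F and V = Var F.  Since f is nonnegative and
   nondecreasing, x |-> f(x)^2 - a f(x) - V changes sign only once, from <= 0 to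
   > 0, so the nondecreasing g^2 can be shifted by a constant c to have the same
   sign everywhere: (g^2 - c)(f^2 - a f - V) >= 0.  As E[F^2 - a F - V] = 0,
   taking expectations gives E[F^2 G^2] >= a E[F G^2] + V E[G^2], and the
   weighted Cauchy-Schwarz inequality E[F G]^2 <= E[F] E[F G^2] turns this into
   Var(F G) >= V E[G^2]. *)

Lemma quadratic_ge0_discriminant (F : realFieldType) (a b c : F) : 0 <= a ->
  (forall x, 0 <= a * x ^+ 2 + b * x + c) -> b ^+ 2 <= 4 * a * c.
Proof.
move=> a_ge0 ge0; rewrite -subr_le0.
have := @deg_le2_poly_delta_ge0 _ (Poly [:: c; b; a]).
rewrite size_Poly //= !coefE /=; apply=> // x.
by rewrite !horner_cons hornerC; have := ge0 x; lra.
Qed.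

Lemma quadratic_gt0_upward (F : realDomainType) (a V s t : F) :
  0 <= V -> 0 <= s <= t -> 0 < s ^+ 2 - a * s - V -> 0 < t ^+ 2 - a * t - V.
Proof.
move=> V_ge0 /andP[s_ge0 st] hs.
have a_lt_s : a < s by nra.
nra.
Qed.

Lemma single_crossing_sign_aligned disp (T : orderType disp) (R : realType)
    (h k : T -> R) :
  (forall x y, (x <= y)%O -> 0 < h x -> 0 < h y) ->
  {homo k : x y / (x <= y)%O >-> x <= y} -> (exists M, forall x, `|k x| <= M) ->
  exists c, forall x, 0 <= (k x - c) * h x.
Proof.
move=> crossing k_homo [M k_bnd].
(* c := sup S separates k on {h <= 0} from k on {h > 0};
   -M only keeps S nonempty. *)
pose S := [set - M] `|` [set k y | y in [set y | h y <= 0]].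
have S_ne0 : S !=set0 by exists (- M); left.
have S_ub : ubound S `|M|.
  move=> _ [-> | [y _ <-]]; first by rewrite ler_normr lexx orbT.
  by rewrite (le_trans _ (ler_norm M)) // (le_trans (ler_norm _)).
exists (sup S) => x; have [hx_le0 | hx_gt0] := lerP (h x) 0.
- have : k x <= sup S.
    apply: sup_upper_bound; first by split => //; exists `|M|.
    by rewrite /S; right; exists x.
  by rewrite -subr_le0 => ?; apply: mulr_le0.
- suff : sup S <= k x.
    by rewrite -subr_ge0 => ?; apply: mulr_ge0 => //; apply: ltW.
  apply: ge_sup => // _ [-> | [y /= hy_le0 <-]].
    by have := k_bnd x; rewrite ler_norml => /andP[].
  apply: k_homo; rewrite leNgt; apply/negP => /ltW /(crossing _ _)/(_ hx_gt0).
  by rewrite ltNge hy_le0.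
Qed.

Section bounded_expectation.
Context {d : measure_display} {T : measurableType d} {R : realType}.
Variable P : probability T R.

Definition bounded_measurable (Y : T -> R) :=
  measurable_fun setT Y /\ exists M, forall w, `|Y w| <= M.

Lemma bounded_measurable_cst (c : R) : bounded_measurable (fun=> c).
Proof. by split; [exact: measurable_cst | exists `|c|]. Qed.

Lemma bounded_measurableD (Y Z : T -> R) : bounded_measurable Y ->
  bounded_measurable Z -> bounded_measurable (fun w => Y w + Z w).
Proof.
move=> [mY [M YM]] [mZ [N ZN]]; split; first exact: measurable_funD.
by exists (M + N) => w; rewrite (le_trans (ler_normD _ _)) // lerD.
Qed.

Lemma bounded_measurableN (Y : T -> R) :
  bounded_measurable Y -> bounded_measurable (fun w => - Y w).
Proof.
move=> [mY [M YM]]; split; first exact: measurable_funN.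
by exists M => w; rewrite normrN.
Qed.

Lemma bounded_measurableM (Y Z : T -> R) : bounded_measurable Y ->
  bounded_measurable Z -> bounded_measurable (fun w => Y w * Z w).
Proof.
move=> [mY [M YM]] [mZ [N ZN]]; split; first exact: measurable_funM.
by exists (M * N) => w; rewrite normrM ler_pM.
Qed.

Lemma bounded_measurable_Lfun1 (Y : T -> R) :
  bounded_measurable Y -> Y \in Lfun P 1.
Proof.
move=> [mY [M YM]]; apply/Lfun1_integrable.
apply: measurable_bounded_integrable => //.
  by rewrite -ge0_fin_numE // fin_num_measure.
exists M; split; first exact: num_real.
by move=> M' MM' w _; exact: le_trans (YM w) (ltW MM').
Qed.

Lemma bounded_measurable_comp (h : R -> R) (X : T -> R) :
  measurable_fun setT h -> measurable_fun setT X ->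
  (exists M, forall x, `|h x| <= M) -> bounded_measurable (fun w => h (X w)).
Proof.
by move=> mh mX [M h_bnd]; split; [exact: measurableT_comp | exists M].
Qed.

Definition expectR (Y : T -> R) : R := fine 'E_P[Y]%E.

Lemma expectRE (Y : T -> R) :
  bounded_measurable Y -> ('E_P[Y] = (expectR Y)%:E)%E.
Proof.
by move=> bY; rewrite fineK // expectation_fin_num // bounded_measurable_Lfun1.
Qed.

Lemma eq_expectR (Y Z : T -> R) :
  (forall w, Y w = Z w) -> expectR Y = expectR Z.
Proof. by move=> YZ; congr expectR; apply/funext. Qed.

Lemma expectRD (Y Z : T -> R) : bounded_measurable Y -> bounded_measurable Z ->
  expectR (fun w => Y w + Z w) = expectR Y + expectR Z.
Proof.
move=> bY bZ; rewrite [LHS]/expectR [X in ('E_P[X])%E](_ : _ = Y \+ Z) //.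
by rewrite expectationD ?bounded_measurable_Lfun1 // !expectRE.
Qed.

Lemma expectRZl (k : R) (Y : T -> R) : bounded_measurable Y ->
  expectR (fun w => k * Y w) = k * expectR Y.
Proof.
move=> bY; rewrite [LHS]/expectR [X in ('E_P[X])%E](_ : _ = k \o* Y).
  by rewrite expectationZl ?bounded_measurable_Lfun1 // expectRE.
by apply/funext => w; rewrite /= mulrC.
Qed.

Lemma expectR_cst (c : R) : expectR (fun=> c) = c.
Proof. by rewrite /expectR expectation_cst. Qed.

Lemma expectR_ge0 (Y : T -> R) : (forall w, 0 <= Y w) -> 0 <= expectR Y.
Proof. by move=> Y_ge0; rewrite fine_ge0 // expectation_ge0. Qed.

Definition varianceR (Y : T -> R) : R :=
  expectR (fun w => Y w ^+ 2) - expectR Y ^+ 2.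

Local Ltac bounded :=
  repeat first [ assumption | exact: bounded_measurable_cst
               | apply: bounded_measurableD | apply: bounded_measurableN
               | apply: bounded_measurableM ].

Lemma varianceRE (Y : T -> R) :
  bounded_measurable Y -> 'V_P[Y] = (varianceR Y)%:E.
Proof.
move=> bY; rewrite /variance covariance.unlock.
rewrite [X in ('E_P[X])%E](_ : _ = fun w => (Y w - expectR Y) ^+ 2) //.
rewrite expectRE; last by bounded.
congr EFin; rewrite /varianceR.
rewrite [LHS](eq_expectR _ (fun w =>
  Y w ^+ 2 + (- (2 * expectR Y)) * Y w + expectR Y ^+ 2)); last by move=> w; ring.
by rewrite !expectRD ?expectRZl ?expectR_cst; [ring | bounded..].
Qed.

Lemma expectR_mul_sqr_le (F G : T -> R) : bounded_measurable F ->
  bounded_measurable G -> (forall w, 0 <= F w) ->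
  expectR (fun w => F w * G w) ^+ 2 <=
    expectR F * expectR (fun w => F w * G w ^+ 2).
Proof.
move=> bF bG F_ge0.
set a := expectR F; set b := expectR _; set q := expectR (fun w => _ * _ ^+ 2).
have q_ge0 : 0 <= q by apply: expectR_ge0 => w; rewrite mulr_ge0 ?sqr_ge0.
suff : (- 2 * b) ^+ 2 <= 4 * q * a by nra.
apply: quadratic_ge0_discriminant => // x.
have : 0 <= expectR (fun w => F w * (x * G w - 1) ^+ 2).
  by apply: expectR_ge0 => w; rewrite mulr_ge0 ?sqr_ge0.
rewrite (eq_expectR _ (fun w =>
  x ^+ 2 * (F w * G w ^+ 2) + (- 2 * x) * (F w * G w) + F w));
  last by move=> w; ring.
by rewrite !expectRD ?expectRZl; [rewrite -/a -/b -/q; lra | bounded..].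
Qed.

Lemma expectR_mul_sign_aligned_ge0 (H K : T -> R) (c : R) :
  (forall w, 0 <= (K w - c) * H w) ->
  bounded_measurable H -> bounded_measurable K -> expectR H = 0 ->
  0 <= expectR (fun w => K w * H w).
Proof.
move=> aligned bH bK EH0.
rewrite (eq_expectR _ (fun w => (K w - c) * H w + c * H w));
  last by move=> w; ring.
by rewrite expectRD ?expectRZl ?EH0 ?mulr0 ?addr0 ?expectR_ge0 //; bounded.
Qed.

Lemma varianceR_mul_ge (F G : T -> R) (c : R) :
  bounded_measurable F -> bounded_measurable G -> (forall w, 0 <= F w) ->
  (forall w, 0 <= (G w ^+ 2 - c) * (F w ^+ 2 - expectR F * F w - varianceR F)) ->
  varianceR F * expectR (fun w => G w ^+ 2) <= varianceR (fun w => F w * G w).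
Proof.
move=> bF bG F_ge0 aligned.
have CS := expectR_mul_sqr_le _ _ bF bG F_ge0.
set a := expectR F in aligned CS *; set V := varianceR F in aligned *.
have : 0 <= expectR (fun w => G w ^+ 2 * (F w ^+ 2 - a * F w - V)).
  apply: (expectR_mul_sign_aligned_ge0 _ _ _ aligned); [bounded.. |].
  rewrite (eq_expectR _ (fun w => F w ^+ 2 + (- a) * F w + (- V)));
    last by move=> w; ring.
  rewrite !expectRD ?expectRZl ?expectR_cst; [|bounded..].
  by rewrite /V /varianceR -/a; ring.
rewrite (eq_expectR _ (fun w => (F w * G w) ^+ 2 + (- a) * (F w * G w ^+ 2)
                              + (- V) * G w ^+ 2)); last by move=> w; ring.
by rewrite !expectRD ?expectRZl /varianceR; [lra | bounded..].
Qed.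
End bounded_expectation.

Theorem lemma4p10 (d : measure_display) (T : measurableType d) (R : realType)
  (P : probability T R) (X : {RV P >-> R}) (f g : R -> R)
  (f_ge0 : forall x, 0 <= f x) (g_ge0 : forall x, 0 <= g x)
  (f_bnd : exists M : R, forall x, f x <= M)
  (g_bnd : exists M : R, forall x, g x <= M)
  (f_incr : {homo f : x y / x <= y}) (g_incr : {homo g : x y / x <= y}) :
  (variance P (fun w => f (X w)) * 'E_P[fun w => (g (X w) ^+ 2)%R]
    <= variance P (fun w => (f (X w) * g (X w))%R))%E.
Proof.
have bounded_comp (h : R -> R) : (forall x, 0 <= h x) ->
    (exists M, forall x, h x <= M) -> {homo h : x y / x <= y} ->
    bounded_measurable (fun w => h (X w)).
  move=> h_ge0 [M h_le] h_incr; apply: bounded_measurable_comp => //.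
    exact: nondecreasing_measurable h_incr.
  by exists M => x; rewrite ger0_norm.
have bF := bounded_comp f f_ge0 f_bnd f_incr.
have bG := bounded_comp g g_ge0 g_bnd g_incr.
pose a := expectR P (fun w => f (X w)).
pose V := varianceR P (fun w => f (X w)).
have V_ge0 : 0 <= V by rewrite -lee_fin -varianceRE // variance_ge0.
have [c aligned] :
    exists c, forall x, 0 <= (g x ^+ 2 - c) * (f x ^+ 2 - a * f x - V).
  apply: single_crossing_sign_aligned => [x y xy | x y xy | ].
  - by apply: quadratic_gt0_upward; rewrite ?f_ge0 ?f_incr.
  - by rewrite ler_sqr ?nnegrE ?g_incr.
  - have [Mg g_le] := g_bnd; exists (Mg ^+ 2) => x.
    by rewrite ger0_norm ?sqr_ge0 // ler_sqr ?nnegrE // (le_trans (g_ge0 x)).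
have bFG := bounded_measurableM _ _ bF bG.
have bG2 := bounded_measurableM _ _ bG bG.
rewrite !varianceRE ?expectRE // -EFinM lee_fin.
by apply: (varianceR_mul_ge P _ _ c) => // w; apply: aligned.
Qed.
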